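(* For $m,k$ let $E(m,k)$ be the event that there is a subset $U\subset V_n$ with $|U|=m$ and $|U^{*2}|\ge k$. Then there is an increasing positive function $\varepsilon_3(\cdot)$ and a constant $C_3=C_3(r)$ such that for every $\eta>0$ and every $m\le\varepsilon_3(\eta)n$, $$\mathbb P\left[E(m,(1+\eta)m)\right]\le C_3\exp\left(-\frac{\eta^2}{8r}\,m\log(n/m)\right).$$
   Context: Fix an integer $r\ge3$, let $V_n=\{1,\dots,n\}$ with $rn$ even, and let $\mathbb P$ be the law of the random multigraph $G_n$ on $V_n$ obtained by giving each vertex $r$ half-edges and pairing all $rn$ half-edges uniformly at random. Write $y\sim x$ if $y$ and $x$ are joined by an edge of $G_n$. For $U\subset V_n$, $U^{*2}:=\{y\in V_n: y\sim x\text{ and }y\sim z\text{ for some }x,z\in U\text{ with }x\ne z\}$ (it may contain vertices of $U$). *)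

From mathcomp Require Import all_boot.
From mathcomp Require Import perm fingroup.
From Stdlib Require Import Reals.

Set Implicit Arguments.
Unset Strict Implicit.
Unset Printing Implicit Defensive.

(* Half-edges of the configuration model on V_n = 'I_n (vertices 0..n-1,
   standing for 1..n), each vertex carrying r half-edges. *)
Definition halfedge (n r : nat) : finType := ('I_n * 'I_r)%type.

(* A perfect matching of the half-edges: a fixed-point-free involution. *)
Definition is_pairing (n r : nat) (f : {perm halfedge n r}) : bool :=
  [forall h, (f (f h) == h) && (f h != h)].

Definition adj (n r : nat) (f : {perm halfedge n r}) (y x : 'I_n) : bool :=
  [exists i : 'I_r, exists j : 'I_r, f (y, i) == (x, j)].

Definition star2 (n r : nat) (f : {perm halfedge n r}) (U : {set 'I_n})
  : {set 'I_n} :=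
  [set y | [exists x in U, exists z in U, (x != z) && adj f y x && adj f y z]].

Definition Rleb (x y : R) : bool := if Rle_dec x y then true else false.

Definition event_E (n r : nat) (m : nat) (k : R) (f : {perm halfedge n r})
  : bool :=
  [exists U : {set 'I_n}, (#|U| == m) && Rleb k (INR #|star2 f U|)].

Definition prob_pairing (n r : nat) (E : {perm halfedge n r} -> bool) : R :=
  (INR #|[set f : {perm halfedge n r} | is_pairing f && E f]| /
   INR #|[set f : {perm halfedge n r} | is_pairing f]|)%R.

From Stdlib Require Import Reals Lra.
From mathcomp Require Import all_boot.
From mathcomp Require Import perm fingroup.

Set Implicit Arguments.
Unset Strict Implicit.
Unset Printing Implicit Defensive.

(* If some U with |U| = m has |U^{*2}| >= (1 + eta) m, then, since every vertex
   of U^{*2} sends two edges into U, the set A = U :|: U^{*2} of at most (1 + r) m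
   vertices spans at least |A| + eta m edges.  For fixed A and a set D of
   |A| + t half-edges of A (t the least integer >= eta m), switching one
   half-edge of D at a time to a partner outside D and f(D) shows that the
   pairings matching D inside A form a fraction at most (r|A| / (rn - 2|D|))^|D|
   of all pairings.  Summing over A and D, the binomial factors cost e^{O(rm)},
   while the t surplus edges contribute (O(rm/n))^t; for m <= eps3(eta) n the
   latter wins, with room to spare. *)

Lemma card_dep_pairs (I J : finType) (A : {set I}) (B : I -> {set J}) :
  #|[set p : I * J | (p.1 \in A) && (p.2 \in B p.1)]| = \sum_(i in A) #|B i|.
Proof.
rewrite -sum1dep_card (eq_bigr (fun i => \sum_(j in B i) 1)) => [|i _];
  by rewrite ?pair_big_dep ?sum1_card.
Qed.

Lemma exists_subset_card (T : finType) (D : {set T}) k :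
  k <= #|D| -> exists2 D' : {set T}, D' \subset D & #|D'| = k.
Proof.
move=> leqkD.
have : 0 < #|[set A : {set T} | A \subset D & #|A| == k]| by rewrite cards_draws bin_gt0.
by case/card_gt0P => A; rewrite inE => /andP [sAD /eqP cardA]; exists A.
Qed.

Lemma card_bigcup_le (I T : finType) (P : pred I) (F : I -> {set T}) :
  #|\bigcup_(i | P i) F i| <= \sum_(i | P i) #|F i|.
Proof.
elim/big_rec2: _ => [|i k U _ leUk]; first by rewrite cards0.
by rewrite (leq_trans (leq_card_setU _ _).1) // leq_add2l.
Qed.

Section Switching.
Variable T : finType.
Implicit Types (f : {perm T}) (S D : {set T}).

Definition fpf_involution f := [forall h, (f (f h) == h) && (f h != h)].

Definition matched_into S D : {set {perm T}} :=
  [set f | fpf_involution f && [forall d in D, (f d \in S) && (f d \notin D)]].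

Lemma fpf_involutionP f :
  reflect ((forall h, f (f h) = h) /\ (forall h, f h != h)) (fpf_involution f).
Proof.
apply: (iffP forallP) => [fP | [ffK fN] h]; last by rewrite ffK eqxx fN.
by split=> h; case/andP: (fP h) => /eqP.
Qed.

Lemma fpf_involution_conj f a b :
  fpf_involution f -> fpf_involution (tperm a b * f * tperm a b)%g.
Proof.
case/fpf_involutionP=> ffK fN; apply/fpf_involutionP; split=> h.
  by rewrite !permM tpermK ffK tpermK.
rewrite !permM; apply: contraNneq (fN (tperm a b h)) => fh.
by rewrite -[in X in _ == X]fh tpermK.
Qed.

Lemma matched_intoP S D f :
  reflect (fpf_involution f /\ forall d, d \in D -> f d \in S /\ f d \notin D)
          (f \in matched_into S D).
Proof.
rewrite inE; apply: (iffP andP) => -[fI fD]; split=> //.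
  by move=> d dD; move/forallP/(_ d): fD; rewrite dD => /andP.
by apply/forall_inP => d /fD [-> ->].
Qed.

Lemma matched_into_subset S D D' :
  D' \subset D -> matched_into S D \subset matched_into S D'.
Proof.
move=> sD'D; apply/subsetP => f /matched_intoP [fI fD]; apply/matched_intoP.
split=> // d' d'D'; have [fS fND] := fD d' (subsetP sD'D _ d'D').
by split=> //; apply: contra fND; apply: (subsetP sD'D).
Qed.

Section Rematch.
Variables (S D : {set T}) (d : T).
Hypothesis dD : d \in D.

(* The switching: [d] gets matched to [c], and [f d] to the old partner of [c]. *)
Definition rematch f c : {perm T} := (tperm (f d) c * f * tperm (f d) c)%g.

Lemma rematchK f c : (tperm (f d) c * rematch f c * tperm (f d) c)%g = f.
Proof. by apply/permP => h; rewrite !permM !tpermK. Qed.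

Lemma rematch_at f c : f d != d -> d != c -> rematch f c d = c.
Proof. by move=> fdN dNc; rewrite !permM (tpermD fdN) ?tpermL // eq_sym. Qed.

Lemma rematch_matched f c :
  f \in matched_into S D -> c \notin D :|: f @: D ->
  rematch f c \in matched_into S (D :\ d) /\ f d \in S.
Proof.
case/matched_intoP=> fI fD; rewrite in_setU negb_or => /andP [cND cNfD].
have [fdS fdND] := fD d dD; split=> //; apply/matched_intoP.
split; first exact: fpf_involution_conj.
move=> d' /setD1P [d'Nd d'D]; have [fd'S fd'ND] := fD d' d'D.
have -> : rematch f c d' = f d'.
  rewrite !permM (@tpermD _ (f d) c d'); first last.
  - by apply: contraNneq cND => ->.
  - by apply: contraNneq fdND => ->.
  rewrite tpermD //; last by apply: contraNneq cNfD => ->; rewrite imset_f.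
  by rewrite (inj_eq perm_inj) eq_sym.
by split=> //; apply: contra fd'ND => /setD1P [_ ->].
Qed.

(* Each f matched into S has at least |T| - 2|D| choices of c outside D and
   f(D), and (f, c) |-> (rematch f c, f d) is injective on these pairs. *)
Lemma card_matched_into_rematch :
  #|matched_into S D| * (#|T| - 2 * #|D|)
    <= #|matched_into S (D :\ d)| * #|S|.
Proof.
pose X := [set p : {perm T} * T |
            (p.1 \in matched_into S D) && (p.2 \in ~: (D :|: p.1 @: D))].
have X_ge : #|matched_into S D| * (#|T| - 2 * #|D|) <= #|X|.
  rewrite (card_dep_pairs _ (fun f => ~: (D :|: f @: D))) -sum_nat_const.
  apply: leq_sum => f _.
  rewrite [#|~: _|]cardsCs setCK leq_sub2l // (leq_trans (leq_card_setU _ _).1) //.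
  by rewrite mul2n -addnn leq_add2l leq_imset_card.
pose Phi (p : {perm T} * T) := (rematch p.1 p.2, p.1 d).
have XP f c : (f, c) \in X -> [/\ f \in matched_into S D, f d != d & d != c].
  rewrite inE /= => /andP [fM]; rewrite in_setC in_setU negb_or.
  case/andP=> cND _; split=> //; last by apply: contraNneq cND => <-.
  by case/matched_intoP: fM => /fpf_involutionP [_ ->].
have Phi_inj : {in X &, injective Phi}.
  move=> [f1 c1] [f2 c2] /XP [_ fdN1 dNc1] /XP [_ fdN2 dNc2] [E1 E2] /=.
  have c12 : c1 = c2 by rewrite -(rematch_at fdN1 dNc1) E1 rematch_at.
  by rewrite -(rematchK f1 c1) -(rematchK f2 c2) E1 E2 c12.
rewrite (leq_trans X_ge) // -cardsX -(card_in_imset Phi_inj) subset_leq_card //.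
apply/subsetP => _ /imsetP [[f c] pX ->]; move: pX; rewrite inE /= => /andP [fM].
by rewrite in_setC => /(rematch_matched fM) [rM fdS]; apply/setXP.
Qed.

End Rematch.

Definition matchings : {set {perm T}} := [set f | fpf_involution f].

Lemma card_matched_into_le S D :
  #|matched_into S D| * (#|T| - 2 * #|D|) ^ #|D| <= #|matchings| * #|S| ^ #|D|.
Proof.
move cardD: #|D| => k; elim: k D cardD => [|k IHk] D cardD.
  rewrite !expn0 !muln1 subset_leq_card //.
  by apply/subsetP => f /matched_intoP [fI _]; rewrite inE.
have /card_gt0P [d dD] : 0 < #|D| by rewrite cardD.
have cardDd : #|D :\ d| = k by move: cardD; rewrite (cardsD1 d) dD => -[].
have := card_matched_into_rematch S dD; rewrite cardD => step.
have IHd := IHk _ cardDd.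
rewrite !expnS mulnA (leq_trans (leq_mul step (leqnn _))) //.
rewrite -mulnA mulnCA [X in _ <= X]mulnCA leq_mul2l orbC (leq_trans _ IHd) //.
rewrite leq_mul2l orbC; case: (posnP k) => [-> //|k_gt0].
by rewrite leq_exp2r // leq_sub2l // leq_mul2l leqnSn orbT.
Qed.

(* Keep, of each pair {h, f h} inside S, the element of smaller rank. *)
Lemma exists_matched_half S f : fpf_involution f ->
  exists2 D : {set T}, #|[set h in S | f h \in S]| <= 2 * #|D| &
             D \subset S /\ f \in matched_into S D.
Proof.
case/fpf_involutionP=> ffK fN; set G := [set h in S | f h \in S].
pose D := [set h in G | enum_rank h < enum_rank (f h)].
have sDG : D \subset G by apply/subsetP => h; rewrite inE => /andP [].
exists D; last split.
- rewrite -(cardsID D G) (setIidPr sDG) mul2n -addnn leq_add2l.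
  rewrite -(card_imset _ (@perm_inj _ f)) subset_leq_card //.
  apply/subsetP => _ /imsetP [h /setDP [hG hND] ->].
  move: hG hND; rewrite !inE ffK => /andP [hS fhS]; rewrite hS fhS /= -leqNgt.
  rewrite ltn_neqAle => ->; rewrite andbT.
  by apply: contraNneq (fN h) => /val_inj /enum_rank_inj ->.
- by apply: subset_trans sDG _; apply/subsetP => h; rewrite inE => /andP [].
apply/matched_intoP; split; first exact/fpf_involutionP.
move=> d; rewrite !inE ffK => /andP [/andP [dS fdS] lt_d_fd]; split=> //.
by rewrite dS fdS /= ltnNge (ltnW lt_d_fd).
Qed.

End Switching.

Lemma is_pairingE n r (f : {perm halfedge n r}) : is_pairing f = fpf_involution f.
Proof. by []. Qed.

Section ConfigurationModel.
Variables n r : nat.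
Local Notation H := (halfedge n r).
Implicit Types (f : {perm H}) (U S X : {set 'I_n}).

Definition halfedges_at X : {set H} := [set h : H | h.1 \in X].

Lemma card_halfedges_at X : #|halfedges_at X| = #|X| * r.
Proof.
have := card_dep_pairs X (fun=> [set: 'I_r]).
rewrite sum_nat_const cardsT card_ord => <-.
by apply: eq_card => -[x i]; rewrite !inE andbT.
Qed.

Definition links f S U : {set H} :=
  [set h : H | (h.1 \in S) && (f h \in halfedges_at U)].

Lemma card_links_le f S U : #|links f S U| <= #|U| * r.
Proof.
rewrite -card_halfedges_at -(card_imset _ (@perm_inj _ f)) subset_leq_card //.
by apply/subsetP => _ /imsetP [h + ->]; rewrite inE => /andP [].
Qed.

Lemma two_le_card_links_at f U y :
  y \in star2 f U -> 1 < #|[set i : 'I_r | f (y, i) \in halfedges_at U]|.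
Proof.
rewrite inE => /exists_inP [x xU /exists_inP [z zU /andP [/andP [xNz]]]].
case/existsP=> i /existsP [j /eqP fyi] /existsP [i' /existsP [j' /eqP fyi']].
have iNi' : i != i'.
  by apply: contraNneq xNz => ii'; move: fyi; rewrite ii' fyi' => -[->].
have two : 1 < #|[set i; i']| by rewrite cards2 iNi'.
apply: leq_trans two (subset_leq_card _).
by apply/subsetP => k /set2P [] ->; rewrite !inE ?fyi ?fyi'.
Qed.

Lemma card_links_ge f S U : S \subset star2 f U -> 2 * #|S| <= #|links f S U|.
Proof.
move=> sSW; have -> : #|links f S U| =
    \sum_(y in S) #|[set i : 'I_r | f (y, i) \in halfedges_at U]|.
  by rewrite -card_dep_pairs; apply: eq_card => -[y i]; rewrite !inE.
rewrite mulnC -sum_nat_const.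
by apply: leq_sum => y /(subsetP sSW) /two_le_card_links_at.
Qed.

Lemma card_star2_le f U : 2 * #|star2 f U| <= #|U| * r.
Proof. exact: leq_trans (card_links_ge (subxx _)) (card_links_le f _ U). Qed.

(* The links of star2 f U and the partners of the links of star2 f U :\: U
   are disjoint sets of half-edges matched inside U :|: star2 f U. *)
Lemma card_inner_halfedges_star2 f U : fpf_involution f ->
  2 * (#|star2 f U| + #|star2 f U :\: U|) <=
  #|[set h in halfedges_at (U :|: star2 f U) |
       f h \in halfedges_at (U :|: star2 f U)]|.
Proof.
case/fpf_involutionP=> ffK _; set W := star2 f U.
have le_links := leq_add (card_links_ge (subxx W)) (card_links_ge (subsetDl W U)).
rewrite mulnDr (leq_trans le_links) //; clearbody W.
have disj : [disjoint links f W U & f @: links f (W :\: U) U].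
  rewrite disjoint_subset; apply/subsetP => x; rewrite !inE => /andP [_ fxU].
  apply/imsetP => -[h]; rewrite !inE => /andP [/andP [hNU _] _] xE.
  by move: fxU; rewrite xE ffK (negPf hNU).
rewrite -(card_imset (links f (W :\: U) U) (@perm_inj _ f)).
have := (leq_card_setU (links f W U) (f @: links f (W :\: U) U)).2.
rewrite disj => /eqP <-; apply: subset_leq_card; rewrite subUset; apply/andP; split.
  by apply/subsetP => h; rewrite !inE => /andP [-> ->]; rewrite !orbT.
apply/subsetP => _ /imsetP [h + ->].
by rewrite !inE ffK => /andP [/andP [_ ->] ->]; rewrite !orbT.
Qed.

Lemma dense_set_of_star2 f U t : fpf_involution f ->
  #|U| + t <= #|star2 f U| ->
  exists (A : {set 'I_n}),
    exists2 D : {set H}, #|A| <= (1 + r) * #|U| /\ #|D| = #|A| + t &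
    D \subset halfedges_at A /\ f \in matched_into (halfedges_at A) D.
Proof.
move=> fI leUtW; set W := star2 f U; set A := U :|: W.
have cardA : #|A| = #|U| + #|W :\: U|.
  by rewrite cardsU cardsD [U :&: W]setIC addnBA // subset_leq_card // subsetIl.
have leWD : #|W :\: U| <= #|W| by rewrite subset_leq_card // subsetDl.
have [D0 cardD0 [sD0A fD0]] := exists_matched_half (halfedges_at A) fI.
have := leq_trans (card_inner_halfedges_star2 U fI) cardD0.
rewrite leq_pmul2l // => leWD0.
have [D sDD0 cardD] : exists2 D : {set H}, D \subset D0 & #|D| = #|A| + t.
  apply: exists_subset_card; apply: leq_trans leWD0.
  by rewrite cardA addnAC leq_add2r.
exists A, D; split=> //.
- rewrite cardA mulnDl mul1n leq_add2l mulnC (leq_trans leWD) //.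
  by apply: leq_trans (card_star2_le f U); rewrite leq_pmull.
- exact: subset_trans sDD0 sD0A.
- exact: subsetP (matched_into_subset _ sDD0) _ fD0.
Qed.

End ConfigurationModel.

Lemma card_halfedge n r : #|halfedge n r| = n * r.
Proof. by rewrite card_prod !card_ord. Qed.

(* Triples (A, D, f) witnessing that the s vertices of A span at least e edges of f. *)
Definition span_count n r s e : nat :=
  \sum_(A : {set 'I_n} | #|A| == s)
     \sum_(D : {set halfedge n r} | (D \subset halfedges_at r A) && (#|D| == e))
        #|matched_into (halfedges_at r A) D|.

Lemma span_count_le n r s e :
  span_count n r s e * (n * r - 2 * e) ^ e
    <= 'C(n, s) * 'C(s * r, e) * #|matchings (halfedge n r)| * (s * r) ^ e.
Proof.
rewrite /span_count big_distrl -!mulnA -[n in 'C(n, s)]card_ord -card_draws.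
rewrite -sum_nat_cond_const; apply: leq_sum => A /eqP cardA.
rewrite big_distrl -cardA -(card_halfedges_at r A) -cards_draws -sum_nat_cond_const.
apply: leq_sum => D /andP [_ /eqP cardD].
have := card_matched_into_le (halfedges_at r A) D.
by rewrite cardD card_halfedge.
Qed.

Lemma span_count_eq0 n r s e : s * r < e -> span_count n r s e = 0.
Proof.
move=> lt_sr_e; rewrite /span_count big1 // => A /eqP cardA.
rewrite big1 // => D /andP [sDA /eqP cardD].
by move: (subset_leq_card sDA); rewrite card_halfedges_at cardA cardD leqNgt lt_sr_e.
Qed.

Lemma card_dense_pairings n r m t :
  #|[set f : {perm halfedge n r} | fpf_involution f &&
      [exists U : {set 'I_n}, (#|U| == m) && (m + t <= #|star2 f U|)]]|
    <= \sum_(s < ((1 + r) * m).+1) span_count n r s (s + t).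
Proof.
set Ev := [set f | _]; pose sg := (1 + r) * m.
have sub : Ev \subset \bigcup_(s < sg.+1) \bigcup_(A : {set 'I_n} | #|A| == s)
    \bigcup_(D : {set halfedge n r} |
              (D \subset halfedges_at r A) && (#|D| == s + t))
      matched_into (halfedges_at r A) D.
  apply/subsetP => f; rewrite inE => /andP [fI /existsP [U /andP [/eqP cardU]]].
  rewrite -{1}cardU => /(dense_set_of_star2 fI) [A [D [leA cardD] [sDA fAD]]].
  rewrite cardU -ltnS in leA; apply/bigcupP; exists (Ordinal leA) => //.
  apply/bigcupP; exists A => //; apply/bigcupP; exists D => //.
  by rewrite sDA cardD eqxx.
apply: leq_trans (subset_leq_card sub) _; apply: leq_trans (card_bigcup_le _ _) _.
apply: leq_sum => s _; apply: leq_trans (card_bigcup_le _ _) _.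
by apply: leq_sum => A _; apply: card_bigcup_le.
Qed.

Section RealBounds.
Local Open Scope R_scope.

Lemma INR_addn a b : INR (a + b)%N = INR a + INR b.
Proof. exact: plus_INR. Qed.

Lemma INR_muln a b : INR (a * b)%N = INR a * INR b.
Proof. exact: mult_INR. Qed.

Lemma INR_subn a b : (b <= a)%N -> INR (a - b)%N = INR a - INR b.
Proof. by move/leP; apply: minus_INR. Qed.

Lemma INR_expn a k : INR (a ^ k)%N = INR a ^ k.
Proof. by rewrite -pow_INR; congr INR; elim: k => //= k IHk; rewrite expnS IHk. Qed.

Lemma leq_INR a b : (a <= b)%N -> INR a <= INR b.
Proof. by move/leP; apply: le_INR. Qed.

Lemma exp_le_compat x y : x <= y -> exp x <= exp y.
Proof. by case=> [/exp_increasing/Rlt_le | ->]; [|apply: Rle_refl]. Qed.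

Lemma ln_le_compat x y : 0 < x -> x <= y -> ln x <= ln y.
Proof. by move=> x_gt0 [/(ln_increasing _ _ x_gt0)/Rlt_le | ->]; [|apply: Rle_refl]. Qed.

Lemma pow_eq_exp q k : 0 < q -> q ^ k = exp (INR k * ln q).
Proof. by move=> q_gt0; rewrite -Rpower_pow. Qed.

Lemma pow_le_exp p k : 0 <= p -> (1 + p) ^ k <= exp (p * INR k).
Proof.
move=> p_ge0; elim: k => [|k IHk]; first by rewrite /= Rmult_0_r exp_0; lra.
rewrite S_INR Rmult_plus_distr_l Rmult_1_r exp_plus /= [exp _ * _]Rmult_comm.
by apply: Rmult_le_compat => //; [lra | apply: pow_le; lra | apply: exp_ineq1_le].
Qed.

Lemma binom_pow_le k s p : 0 <= p -> INR 'C(k, s) * p ^ s <= (1 + p) ^ k.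
Proof.
move=> p_ge0; elim: k s => [|k IHk] [|s].
- by rewrite /=; lra.
- by rewrite bin0n /=; lra.
- have : 1 <= (1 + p) ^ k.+1 by apply: pow_R1_Rle; lra.
  by rewrite bin0 /=; lra.
have IH1 := IHk s.+1; have IH2 := IHk s.
have pk_ge0 : 0 <= (1 + p) ^ k by apply: pow_le; lra.
have ps_ge0 : 0 <= p ^ s by apply: pow_le.
rewrite binS INR_addn /= in IH1 *; nra.
Qed.

Lemma span_count_le_ratio n r s e :
  (0 < n)%N -> (0 < r)%N -> (e <= s * r)%N -> (4 * s <= n)%N ->
  INR (span_count n r s e) <= INR 'C(n, s) * INR 'C(s * r, e) *
    INR #|matchings (halfedge n r)| * (2 * INR s / INR n) ^ e.
Proof.
move=> n_gt0 r_gt0 le_e_sr le4s_n.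
have le4e : (4 * e <= n * r)%N.
  by rewrite (leq_trans (leq_mul (leqnn 4) le_e_sr)) // mulnA leq_mul2r le4s_n orbT.
have le2e : (2 * e <= n * r)%N by apply: leq_trans le4e; rewrite leq_mul2r orbT.
have := leq_INR (span_count_le n r s e).
rewrite !INR_muln !INR_expn INR_subn // !INR_muln.
move: (leq_INR le4e) (leq_INR le4s_n); rewrite !INR_muln /= => He Hs.
have n_gt0' : 0 < INR n by apply: (lt_INR 0); apply/ltP.
have r_gt0' : 0 < INR r by apply: (lt_INR 0); apply/ltP.
set K := _ * INR #|_|; set D := _ - _ * INR e; set p := 2 * INR s / INR n => Hspan.
have s_ge0 := pos_INR s; have r_ge0 := pos_INR r.
have D_gt0 : 0 < D.
  by rewrite /D; have := Rmult_lt_0_compat _ _ n_gt0' r_gt0'; lra.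
have sr_le_pD : INR s * INR r <= p * D.
  rewrite /p /D; apply: (Rmult_le_reg_l (INR n)) => //.
  have -> : INR n * (2 * INR s / INR n * (INR n * INR r - 2 * INR e))
          = 2 * INR s * (INR n * INR r) - 4 * INR s * INR e by field; lra.
  nra.
have De_gt0 : 0 < D ^ e by apply: pow_lt.
apply: (Rmult_le_reg_r (D ^ e)) => //; apply: (Rle_trans _ _ _ Hspan).
rewrite Rmult_assoc -Rpow_mult_distr; apply: Rmult_le_compat_l.
  by rewrite /K; repeat apply: Rmult_le_pos; apply: pos_INR.
by apply: pow_incr; split => //; apply: Rmult_le_pos.
Qed.

Lemma binom_le_pow2 k j : INR 'C(k, j) <= 2 ^ k.
Proof.
have := binom_pow_le k j Rle_0_1; rewrite pow1 Rmult_1_r.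
by rewrite (_ : 1 + 1 = 2) //; lra.
Qed.

Lemma binom_ratio_le_exp n s : (0 < n)%N ->
  INR 'C(n, s) * (2 * INR s / INR n) ^ s <= exp (2 * INR s).
Proof.
move=> n_gt0; have n_gt0' : 0 < INR n by apply: (lt_INR 0); apply/ltP.
have p_ge0 : 0 <= 2 * INR s / INR n.
  by apply: Rmult_le_pos; [have := pos_INR s; lra | apply/Rlt_le/Rinv_0_lt_compat].
apply: Rle_trans (binom_pow_le n s p_ge0) _; apply: Rle_trans (pow_le_exp n p_ge0) _.
by apply: exp_le_compat; rewrite /Rdiv Rmult_assoc Rinv_l; lra.
Qed.

Lemma span_count_le_exp n r s t sg :
  (0 < n)%N -> (0 < r)%N -> (s <= sg)%N -> (4 * sg <= n)%N ->
  INR (span_count n r s (s + t)%N) <= INR #|matchings (halfedge n r)| *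
    (exp (2 * INR sg) * 2 ^ (sg * r)%N * (2 * INR sg / INR n) ^ t).
Proof.
move=> n_gt0 r_gt0 le_s_sg le4sg_n.
have n_gt0' : 0 < INR n by apply: (lt_INR 0); apply/ltP.
have s_le_sg := leq_INR le_s_sg; have s_ge0 := pos_INR s.
set M := INR #|_|; have M_ge0 : 0 <= M by apply: pos_INR.
have exp_ge0 : 0 <= exp (2 * INR sg) by apply/Rlt_le/exp_pos.
set p := 2 * INR s / INR n; set q := 2 * INR sg / INR n.
have p_ge0 : 0 <= p by apply: Rmult_le_pos; [lra | apply/Rlt_le/Rinv_0_lt_compat].
have p_le_q : p <= q by apply: Rmult_le_compat_r; [apply/Rlt_le/Rinv_0_lt_compat | lra].
have [le_e_sr | lt_sr_e] := leqP (s + t) (s * r); last first.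
  rewrite span_count_eq0 //=; apply: Rmult_le_pos => //.
  by repeat apply: Rmult_le_pos => //; apply: pow_le; lra.
have le4s_n : (4 * s <= n)%N.
  by apply: leq_trans le4sg_n; rewrite leq_mul2l le_s_sg orbT.
apply: Rle_trans (span_count_le_ratio n_gt0 r_gt0 le_e_sr le4s_n) _.
have binom_n : INR 'C(n, s) * p ^ s <= exp (2 * INR sg).
  by apply: Rle_trans (binom_ratio_le_exp s n_gt0) _; apply: exp_le_compat; lra.
have binom_sr : INR 'C(s * r, s + t) <= 2 ^ (sg * r)%N.
  apply: Rle_trans (binom_le_pow2 _ _) _.
  by apply: Rle_pow; [lra | apply/leP; rewrite leq_mul2r le_s_sg orbT].
have -> : INR 'C(n, s) * INR 'C(s * r, s + t) * M * p ^ (s + t)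
         = M * (INR 'C(n, s) * p ^ s * INR 'C(s * r, s + t) * p ^ t).
  by rewrite pow_add; ring.
apply: Rmult_le_compat_l => //; apply: Rmult_le_compat; try apply: pow_incr; try lra.
- by repeat apply: Rmult_le_pos; try apply: pos_INR; apply: pow_le.
- exact: pow_le.
apply: Rmult_le_compat => //; last exact: pos_INR.
by apply: Rmult_le_pos; [apply: pos_INR | apply: pow_le].
Qed.

Lemma pow2_le_exp k : 2 ^ k <= exp (INR k).
Proof.
rewrite pow_eq_exp; last lra.
apply: exp_le_compat; rewrite -[X in _ <= X]Rmult_1_r; apply: Rmult_le_compat_l.
  exact: pos_INR.
rewrite -[X in _ <= X](ln_exp 1); apply/Rlt_le/ln_increasing; first lra.
by have := exp_ineq1 1; lra.
Qed.

(* The hypothesis on [x] pays for the prefactors with half of [eta m x]. *)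
Lemma exponent_estimate r m eta x L :
  3 <= r -> 1 <= m -> 0 < eta -> eta < r -> 0 <= L ->
  2 * (1 + r) * (3 + r) / eta + 2 * L <= x ->
  (1 + r) * m * (3 + r) + eta * m * (L - x) <= - (eta ^ 2 / (8 * r)) * m * x.
Proof.
move=> r_ge3 m_ge1 eta_gt0 eta_lt_r L_ge0 x_ge.
have eta_x : 2 * (1 + r) * (3 + r) + 2 * eta * L <= eta * x.
  apply: Rle_trans (Rmult_le_compat_l _ _ _ (Rlt_le _ _ eta_gt0) x_ge).
  by right; field; lra.
have etax_ge0 : 0 <= eta * x by nra.
have eta_r : eta ^ 2 / (8 * r) * x <= eta * x / 8.
  have -> : eta ^ 2 / (8 * r) * x = (eta / r) * (eta * x) / 8 by field; lra.
  have : eta / r <= 1 by apply: (Rmult_le_reg_r r); [lra | field_simplify; lra].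
  have : 0 <= eta / r by apply/Rlt_le/Rdiv_lt_0_compat; lra.
  nra.
have m_ge0 : 0 <= m by lra.
have := Rmult_le_compat_l _ _ _ m_ge0 eta_x; have := Rmult_le_compat_l _ _ _ m_ge0 eta_r.
nra.
Qed.

Lemma final_estimate r m n t eta :
  3 <= INR r -> 1 <= INR m -> 0 < eta -> eta < INR r -> eta * INR m <= INR t ->
  4 * ((1 + INR r) * INR m) <= INR n ->
  2 * (1 + INR r) * (3 + INR r) / eta + 2 * ln (2 * (1 + INR r)) <= ln (INR n / INR m) ->
  (INR ((1 + r) * m) + 1) * exp (2 * INR ((1 + r) * m)) * 2 ^ ((1 + r) * m * r) *
    (2 * INR ((1 + r) * m) / INR n) ^ t
  <= exp (- (eta ^ 2 / (8 * INR r)) * INR m * ln (INR n / INR m)).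
Proof.
move=> r_ge3 m_ge1 eta_gt0 eta_lt_r eta_le_t n_ge ln_ge.
have sgE : INR ((1 + r) * m) = (1 + INR r) * INR m by rewrite INR_muln INR_addn.
rewrite sgE; set sg := (1 + INR r) * INR m in n_ge *.
set lx := ln (INR n / INR m) in ln_ge *; set L2 := ln (2 * (1 + INR r)) in ln_ge.
have L2_ge0 : 0 <= L2 by rewrite /L2 -ln_1; apply: ln_le_compat; lra.
have sg_gt0 : 0 < sg by rewrite /sg; nra.
set q := 2 * sg / INR n.
have q_gt0 : 0 < q by apply: Rdiv_lt_0_compat; lra.
have q_le1 : q <= 1.
  by rewrite /q; apply: (Rmult_le_reg_r (INR n)); [lra | field_simplify; lra].
have ln_q : ln q = L2 - lx.
  have nm_gt0 : 0 < INR n / INR m by apply: Rdiv_lt_0_compat; lra.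
  have -> : q = 2 * (1 + INR r) * / (INR n / INR m) by rewrite /q /sg; field; lra.
  by rewrite ln_mult ?ln_Rinv //; [lra | apply: Rinv_0_lt_compat].
have ln_q_le0 : ln q <= 0 by rewrite -ln_1; apply: ln_le_compat.
have sg1_le : sg + 1 <= exp sg by have := exp_ineq1_le sg; lra.
have pow2_le : 2 ^ ((1 + r) * m * r) <= exp (sg * INR r).
  by apply: Rle_trans (pow2_le_exp _) _; rewrite INR_muln sgE; apply: Rle_refl.
have qt_le : q ^ t <= exp (eta * INR m * (L2 - lx)).
  by rewrite pow_eq_exp // -ln_q; apply: exp_le_compat; nra.
apply: Rle_trans (_ : exp sg * exp (2 * sg) * exp (sg * INR r) *
                      exp (eta * INR m * (L2 - lx)) <= _).
  apply: Rmult_le_compat; try apply: pow_le; try lra.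
  - by repeat apply: Rmult_le_pos; try apply: pow_le; try apply/Rlt_le/exp_pos; lra.
  apply: Rmult_le_compat => //; try apply: pow_le; try lra.
  - by apply: Rmult_le_pos; [lra | apply/Rlt_le/exp_pos].
  by apply: Rmult_le_compat; [lra | apply/Rlt_le/exp_pos | | apply: Rle_refl].
rewrite -!exp_plus; apply: exp_le_compat.
apply: Rle_trans (exponent_estimate r_ge3 m_ge1 eta_gt0 eta_lt_r L2_ge0 ln_ge).
by rewrite /sg; right; ring.
Qed.

Lemma INR_sum_le_const k (X : nat -> nat) c :
  (forall s, (s < k)%N -> INR (X s) <= c) -> INR (\sum_(s < k) X s) <= INR k * c.
Proof.
elim: k => [|k IHk] le_Xc; first by rewrite big_ord0 /=; lra.
rewrite S_INR big_ord_recr /= INR_addn Rmult_plus_distr_r Rmult_1_l.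
apply: Rplus_le_compat; last exact: le_Xc.
by apply: IHk => s lt_sk; apply: le_Xc; apply: ltnW.
Qed.

End RealBounds.

Section Proposition.
Local Open Scope R_scope.

Lemma RlebP x y : reflect (x <= y) (Rleb x y).
Proof. by rewrite /Rleb; case: Rle_dec => xy; constructor. Qed.

Lemma exists_least_nat_ge x :
  exists t : nat, x <= INR t /\ forall t', x <= INR t' -> (t <= t')%N.
Proof.
have [t0 lt_xt0] := INR_unbounded x.
have ex : exists t, Rleb x (INR t) by exists t0; apply/RlebP; lra.
case: (ex_minnP ex) => t /RlebP le_xt min_t.
by exists t; split=> // t' /RlebP; apply: min_t.
Qed.

(* Chosen so that [m <= eps3 r eta * n] is the hypothesis on [ln (n / m)] of
   [exponent_estimate]. *)
Definition eps3 (r a : R) : R :=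
  exp (- (2 * (1 + r) * (3 + r) / a + 2 * ln (2 * (1 + r)))).

Lemma eps3_increasing r a b : 0 <= r -> 0 < a -> a < b -> eps3 r a < eps3 r b.
Proof.
move=> r_ge0 a_gt0 lt_ab; apply: exp_increasing.
have : / b < / a by apply: Rinv_lt_contravar; nra.
rewrite /Rdiv; nra.
Qed.

Lemma ln_ratio_ge_of_le_eps3 r a x y : 0 < x -> x <= eps3 r a * y ->
  2 * (1 + r) * (3 + r) / a + 2 * ln (2 * (1 + r)) <= ln (y / x).
Proof.
rewrite /eps3; set c := _ + _ => x_gt0; rewrite exp_Ropp => le_x.
have ec_gt0 := exp_pos c.
rewrite -[c in c <= _]ln_exp; apply: ln_le_compat => //.
apply: (Rmult_le_reg_r x) => //; rewrite /Rdiv Rmult_assoc Rinv_l; last lra.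
apply: (Rmult_le_reg_l (/ exp c)); first exact: Rinv_0_lt_compat.
by rewrite -Rmult_assoc Rinv_l; lra.
Qed.

Lemma le_ratio_of_ln r x y : 0 <= r -> 0 < x -> 0 < y ->
  2 * ln (2 * (1 + r)) <= ln (y / x) -> 4 * ((1 + r) * x) <= y.
Proof.
move=> r_ge0 x_gt0 y_gt0 /exp_le_compat; rewrite exp_ln; last exact: Rdiv_lt_0_compat.
rewrite (_ : 2 * _ = ln (2 * (1 + r)) + ln (2 * (1 + r))); last lra.
rewrite exp_plus exp_ln; last lra.
move=> le_yx; have := Rmult_le_compat_r _ _ _ (Rlt_le _ _ x_gt0) le_yx.
rewrite /Rdiv (Rmult_assoc y) Rinv_l; [nra | lra].
Qed.

Lemma prob_pairing_le n r (E : {perm halfedge n r} -> bool) B : 0 <= B ->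
  INR #|[set f : {perm halfedge n r} | is_pairing f && E f]|
    <= INR #|[set f : {perm halfedge n r} | is_pairing f]| * B ->
  prob_pairing E <= B.
Proof.
move=> B_ge0 le_card; rewrite /prob_pairing.
have [-> | P_gt0] := posnP #|[set f : {perm halfedge n r} | is_pairing f]|.
  by rewrite /= /Rdiv Rinv_0 Rmult_0_r.
have P_gt0' : 0 < INR #|[set f : {perm halfedge n r} | is_pairing f]|.
  by apply: (lt_INR 0); apply/ltP.
apply: (Rmult_le_reg_r _ _ _ P_gt0'); rewrite /Rdiv Rmult_assoc Rinv_l; lra.
Qed.

Lemma no_event_E_of_large_eta n r m eta (f : {perm halfedge n r}) :
  (0 < m)%N -> INR r <= eta -> ~~ event_E m ((1 + eta) * INR m) f.
Proof.
move=> m_gt0 le_r_eta; apply/existsP => -[U /andP [/eqP cardU /RlebP le_k]].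
have := leq_INR (card_star2_le f U); rewrite !INR_muln cardU /=.
move: le_k; set k := INR #|star2 f U| => le_k le_2k.
have m_ge0 : 0 <= INR m by apply: pos_INR.
have := Rmult_le_compat_l _ _ _ m_ge0 le_r_eta.
have := Rmult_le_pos _ _ m_ge0 (pos_INR r).
have : 0 < INR m by apply: (lt_INR 0); apply/ltP.
lra.
Qed.

Lemma add_least_nat_le m k t eta :
  (forall t', eta * INR m <= INR t' -> (t <= t')%N) -> 0 <= eta ->
  (1 + eta) * INR m <= INR k -> (m + t <= k)%N.
Proof.
move=> min_t eta_ge0 le_k.
have le_mk : (m <= k)%N by apply/leP/INR_le; have := pos_INR m; nra.
by rewrite -(subnKC le_mk) leq_add2l; apply: min_t; rewrite INR_subn //; lra.
Qed.

Lemma card_event_E_le r n m eta :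
  (3 <= r)%N -> (0 < m)%N -> 0 < eta -> eta < INR r ->
  INR m <= eps3 (INR r) eta * INR n ->
  INR #|[set f : {perm halfedge n r} |
         is_pairing f && event_E m ((1 + eta) * INR m) f]|
    <= INR #|[set f : {perm halfedge n r} | is_pairing f]| *
       exp (- (eta ^ 2 / (8 * INR r)) * INR m * ln (INR n / INR m)).
Proof.
move=> r_ge3 m_gt0 eta_gt0 eta_lt_r le_m_n.
have r_ge3' : 3 <= INR r by move: (leq_INR r_ge3) => /=; lra.
have m_ge1 : 1 <= INR m by move: (leq_INR m_gt0) => /=; lra.
have n_gt0 : 0 < INR n.
  have eps_gt0 : 0 < eps3 (INR r) eta by apply: exp_pos.
  have n_ge0 := pos_INR n; nra.
have ln_ge := ln_ratio_ge_of_le_eps3 (Rlt_le_trans _ _ _ Rlt_0_1 m_ge1) le_m_n.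
have n_ge : 4 * ((1 + INR r) * INR m) <= INR n.
  apply: le_ratio_of_ln => //; try lra.
  have : 0 < 2 * (1 + INR r) * (3 + INR r) / eta by apply: Rdiv_lt_0_compat => //; nra.
  lra.
have n_ge_nat : (4 * ((1 + r) * m) <= n)%N.
  by apply/leP/INR_le; rewrite !INR_muln INR_addn /=; lra.
have [t [le_t min_t]] := exists_least_nat_ge (eta * INR m).
have sub :
  [set f : {perm halfedge n r} | is_pairing f && event_E m ((1 + eta) * INR m) f]
    \subset [set f | fpf_involution f &&
                [exists U : {set 'I_n}, (#|U| == m) && (m + t <= #|star2 f U|)%N]].
  apply/subsetP => f; rewrite !inE.
  case/andP=> fI /existsP [U /andP [cardU /RlebP le_k]].
  rewrite -is_pairingE fI; apply/existsP; exists U; rewrite cardU /=.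
  exact: add_least_nat_le min_t (Rlt_le _ _ eta_gt0) le_k.
have card_le := leq_INR (leq_trans (subset_leq_card sub) (card_dense_pairings n r m t)).
set sg := ((1 + r) * m)%N in n_ge_nat card_le.
set M := INR #|[set f : {perm halfedge n r} | is_pairing f]|.
have span_le s : (s < sg.+1)%N ->
    INR (span_count n r s (s + t)%N) <= M *
      (exp (2 * INR sg) * 2 ^ (sg * r)%N * (2 * INR sg / INR n) ^ t).
  rewrite ltnS => le_s; apply: span_count_le_exp => //.
  - by apply/ltP/INR_lt.
  - exact: leq_trans r_ge3.
apply: Rle_trans (Rle_trans _ _ _ card_le (INR_sum_le_const span_le)) _.
have := final_estimate r_ge3' m_ge1 eta_gt0 eta_lt_r le_t n_ge ln_ge.
rewrite -/sg S_INR => final; rewrite -Rmult_assoc [_ * M]Rmult_comm Rmult_assoc.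
apply: Rmult_le_compat_l; first exact: pos_INR.
by apply: Rle_trans final; right; ring.
Qed.

End Proposition.

(* The ssreflect notations [<] and [<=] shadow those of [R_scope]; re-importing
   Reals restores them for the statement below. *)
From Stdlib Require Import Reals.

Theorem proposition1 (r : nat) (hr : (3 <= r)%N) :
  exists (eps3 : R -> R) (C3 : R),
    (forall a : R, (0 < a)%R -> (0 < eps3 a)%R) /\
    (forall a b : R, (0 < a)%R -> (a < b)%R -> (eps3 a < eps3 b)%R) /\
    forall (eta : R) (n m : nat),
      (0 < eta)%R -> ~~ odd (r * n) ->
      (INR m <= eps3 eta * INR n)%R ->
      (prob_pairing (fun f : {perm halfedge n r} =>
                       event_E m ((1 + eta) * INR m)%R f)
       <= C3 * exp (- (eta ^ 2 / (8 * INR r)) * INR m * ln (INR n / INR m)))%R.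
Proof.
exists (eps3 (INR r)), 1%R; split; first by move=> a _; apply: exp_pos.
split; first by move=> a b; apply: eps3_increasing; apply: pos_INR.
move=> eta n m eta_gt0 _ le_m_n; rewrite Rmult_1_l.
apply: prob_pairing_le; first exact/Rlt_le/exp_pos.
have [-> | m_gt0] := posnP m.
  rewrite (_ : (_ * INR 0 * _)%R = 0%R) /=; last ring.
  rewrite exp_0 Rmult_1_r; apply/leq_INR/subset_leq_card/subsetP => f.
  by rewrite !inE => /andP [].
have [eta_lt_r | le_r_eta] := Rlt_le_dec eta (INR r).
  exact: card_event_E_le.
rewrite (eq_card0 (_ : _ =i pred0)) => [|f]; last first.
  by rewrite !inE (negPf (no_event_E_of_large_eta f m_gt0 le_r_eta)) andbF.
by apply: Rmult_le_pos; [apply: pos_INR | apply/Rlt_le/exp_pos].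
Qed.
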